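(* Let $n$ be a positive integer with at least two distinct prime factors, let $q_1$ be the largest prime smaller than $n$, and write $n=\prod_i p_i^{e_i}$; let $p_1^{a_1}$ be the largest and $p_2^{a_2}$ the second largest of the prime powers $p_i^{e_i}$ in this factorization ($p_1\neq p_2$). If $p_1^{a_1}p_2^{a_2}>n-q_1$, then $n$ satisfies the 3-variation of Condition 1 with $p_1$, $p_2$ and $q_1$.
   Context: A positive integer $n$ satisfies the $N$-variation of Condition 1 with primes $p_1,\dots,p_N$ if these are $N$ different primes and for every $1\le k\le n-1$, $\binom{n}{k}$ is divisible by at least one of $p_1,\dots,p_N$. Here ''largest prime-power divisor'' and ''second largest prime-power divisor'' refer to the maximal prime powers $p_i^{e_i}$ exactly dividing $n$. *)

From mathcomp Require Import all_boot.
Set Implicit Arguments. Unset Strict Implicit. Unset Printing Implicit Defensive.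

Definition condition1_var (n : nat) (ps : seq nat) : Prop :=
  uniq ps /\ all prime ps /\
  (forall k, 1 <= k <= n - 1 -> exists2 p, p \in ps & p %| 'C(n, k)).

Definition ppart (p n : nat) : nat := p ^ logn p n.

(* If neither p1 nor p2 divides 'C(n, k), comparing p-adic valuations in
   k * 'C(n, k) = n * 'C(n.-1, k.-1) shows that p1^a1 and p2^a2 both divide k,
   and by symmetry n - k.  Hence k and n - k are both at least
   p1^a1 * p2^a2 > n - q1, so both are smaller than q1 <= n, and q1 divides
   n! but neither k! nor (n - k)!.  The three primes are distinct because the
   largest prime q1 below n does not divide n: otherwise n >= 2 q1, and
   Bertrand's postulate (by Erdos's argument) gives a prime in (q1, n). *)

From mathcomp Require Import all_boot zify.
Set Implicit Arguments. Unset Strict Implicit. Unset Printing Implicit Defensive.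

Lemma prime_dvd_fact p m : prime p -> (p %| m`!) = (p <= m).
Proof.
move=> pp; elim: m => [|m IH]; first by rewrite fact0 dvdn1; case: p pp => [|[|]].
rewrite factS Euclid_dvdM // IH; apply/idP/idP.
  by case/orP => [/dvdn_leq -> //|/leqW].
by rewrite leq_eqVlt ltnS => /orP[/eqP->|->]; rewrite ?dvdnn ?orbT.
Qed.

Lemma prime_dvd_bin_large p n k :
  prime p -> p <= n -> k < p -> n - k < p -> p %| 'C(n, k).
Proof.
move=> pp pn kp nkp; have [kn|nk] := leqP k n; last by rewrite bin_small.
have := prime_dvd_fact n pp; rewrite pn -(bin_fact kn) !Euclid_dvdM //.
by rewrite !prime_dvd_fact // leqNgt kp leqNgt nkp !orbF.
Qed.

Lemma prime_le_of_dvd_bin p n k : prime p -> k <= n -> p %| 'C(n, k) -> p <= n.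
Proof.
move=> pp kn pC; rewrite -prime_dvd_fact // -(bin_fact kn).
exact: dvdn_mulr.
Qed.

Lemma prod_pfactor_bin n k : k <= n ->
  'C(n, k) = \prod_(0 <= p < n.+1) p ^ logn p 'C(n, k).
Proof.
move=> kn; have C0 : 0 < 'C(n, k) by rewrite bin_gt0.
rewrite -{1}(partnT C0) (widen_partn _ (leq_addr n _)).
rewrite (@big_cat_nat _ _ _ n.+1) //=; last by rewrite ltnS leq_addl.
rewrite [X in _ * X]big1_seq ?muln1; last first.
  move=> p /andP[_]; rewrite mem_index_iota => /andP[np _].
  rewrite lognE C0 /=; case: ifP => // /andP[pp pC].
  by have := prime_le_of_dvd_bin pp kn pC; rewrite leqNgt np.
by apply: eq_bigl.
Qed.

(** * Bertrand's postulate *)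

Lemma binS_add_le_exp2 n i : i < n -> 'C(n, i) + 'C(n, i.+1) <= 2 ^ n.
Proof.
move=> lt_i_n; have := expnDn 1 1 n; rewrite add1n => ->.
under eq_bigr do rewrite !exp1n !muln1.
rewrite -(big_mkord xpredT (fun j => 'C(n, j))) (@big_cat_nat _ _ _ i) //=.
  by rewrite (@big_ltn _ _ _ i) ?(@big_ltn _ _ _ i.+1) ?ltnS ?(ltnW lt_i_n) //; lia.
exact: leqW (ltnW _).
Qed.

Lemma bin_odd_central_le k : 'C(k.*2.+1, k) <= 4 ^ k.
Proof.
have lt_k : k < k.*2.+1 by rewrite ltnS -addnn leq_addr.
have sym : 'C(k.*2.+1, k.+1) = 'C(k.*2.+1, k).
  by rewrite -[RHS](bin_sub (ltnW lt_k)); congr 'C(_, _); lia.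
have := binS_add_le_exp2 lt_k; rewrite sym addnn -mul2n expnS leq_pmul2l //.
by rewrite -mul2n expnM.
Qed.

Lemma central_binS n : n.+1 * 'C(n.+1.*2, n.+1) = (n.*2.+1).*2 * 'C(n.*2, n).
Proof.
have sym : 'C(n.*2.+1, n) = 'C(n.*2.+1, n.+1).
  by rewrite -[RHS](bin_sub (_ : n.+1 <= n.*2.+1)); [congr 'C(_, _) | ]; lia.
by rewrite doubleS binS -sym addnn -mul2n sym mulnCA -mul_bin_diag mulnA mul2n.
Qed.

Lemma exp4_le_central_bin n : 0 < n -> 4 ^ n <= n.*2 * 'C(n.*2, n).
Proof.
case: n => // n _; elim: n => [|n IH]; first by [].
have := central_binS n.+1; rewrite expnS.
move: IH; set c := 'C(_, n.+1); set c' := 'C(_, n.+2); set e := 4 ^ _; nia.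
Qed.

Lemma prod_primes_mid_le_bin k :
  \prod_(k.+2 <= p < k.*2.+2 | prime p) p <= 'C(k.*2.+1, k).
Proof.
have kn : k <= k.*2.+1 by rewrite -addnn; lia.
set C := 'C(_, k); have C0 : 0 < C by rewrite bin_gt0.
apply: (@leq_trans (\prod_(k.+2 <= p < k.*2.+2) p ^ logn p C)).
  rewrite big_mkcond big_nat_cond [X in _ <= X]big_nat_cond.
  apply: leq_prod => p /andP[/andP[lo hi] _].
  case: ifP => pp; last by rewrite lognE pp.
  rewrite -{1}(expn1 p) leq_exp2l ?prime_gt1 // logn_gt0 mem_primes pp C0.
  by apply: prime_dvd_bin_large => //; lia.
apply: dvdn_leq C0 _; rewrite [X in _ %| X](prod_pfactor_bin kn).
rewrite [X in _ %| X](@big_cat_nat _ _ _ k.+2) //=; last by lia.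
exact: dvdn_mull.
Qed.

Lemma primorial_le x : \prod_(0 <= p < x.+1 | prime p) p <= 4 ^ x.
Proof.
elim/ltn_ind: x => x IH.
have [x_le2|x_gt2] := leqP x 2.
  by case: x x_le2 {IH} => [|[|[|]]] //; rewrite unlock.
case/boolP: (odd x) => [odd_x|even_x].
  have [k def_x] : exists k, x = k.*2.+1.
    by exists x./2; rewrite -[x in x = _]odd_double_half odd_x.
  rewrite def_x (@big_cat_nat _ _ _ k.+2) //=; last by lia.
  have -> : 4 ^ k.*2.+1 = 4 ^ k.+1 * 4 ^ k by rewrite -expnD; congr (_ ^ _); lia.
  apply: leq_mul; first by apply: IH; lia.
  exact: leq_trans (prod_primes_mid_le_bin k) (bin_odd_central_le k).
have x_nprime : prime x = false.
  by apply/negP => /even_prime[x2|]; [rewrite x2 in x_gt2 | apply/negP].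
rewrite big_mkcond big_nat_recr //= x_nprime muln1 -big_mkcond /=.
have x_gt0 : 0 < x by apply: ltn_trans x_gt2.
have := IH x.-1; rewrite ltn_predL prednK // => /(_ x_gt0) /leq_trans; apply.
by rewrite leq_pexp2l // leq_pred.
Qed.

Lemma leq_double_divn n d : (n %/ d).*2 <= n.*2 %/ d.
Proof.
have [->|d_gt0] := posnP d; first by rewrite !divn0.
by rewrite leq_divRL // -muln2 mulnAC muln2 leq_double leq_divM.
Qed.

Lemma double_divnB_le1 n d : 0 < d -> n.*2 %/ d - (n %/ d).*2 <= 1.
Proof.
move=> d_gt0; suff : n.*2 %/ d < (n %/ d).*2.+2 by lia.
by rewrite ltn_divLR //; have := ltn_ceil n d_gt0; nia.
Qed.

Lemma logn_central_bin p n : prime p ->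
  logn p 'C(n.*2, n) = \sum_(1 <= k < n.*2.+1) (n.*2 %/ p ^ k - (n %/ p ^ k).*2).
Proof.
move=> pp; have n_le : n <= n.*2 by rewrite -addnn leq_addr.
have := congr1 (logn p) (bin_fact n_le); rewrite -addnn addnK addnn.
rewrite !lognM ?muln_gt0 ?fact_gt0 ?bin_gt0 // !logn_fact //.
have -> : \sum_(1 <= k < n.+1) n %/ p ^ k = \sum_(1 <= k < n.*2.+1) n %/ p ^ k.
  rewrite [RHS](@big_cat_nat _ _ _ n.+1) //= ?ltnS //.
  rewrite [X in _ = _ + X]big1_seq ?addn0 // => k.
  rewrite mem_index_iota => /andP[_ /andP[lt_n_k _]]; apply: divn_small.
  exact: ltn_trans lt_n_k (ltn_expl _ (prime_gt1 pp)).
move=> logn_fact2n; rewrite sumnB => [|k _]; last exact: leq_double_divn.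
by rewrite -(big_morph double doubleD double0); lia.
Qed.

Lemma logn_central_bin_le p n : prime p -> logn p 'C(n.*2, n) <= trunc_log p n.*2.
Proof.
move=> pp; have p_gt1 := prime_gt1 pp; set t := trunc_log p n.*2.
have [->|n_gt0] := posnP n; first by rewrite bin0 logn1.
have t_le : t <= n.*2.
  by apply: leq_trans (ltnW (ltn_expl t p_gt1)) (trunc_logP p_gt1 _); rewrite double_gt0.
rewrite logn_central_bin // (@big_cat_nat _ _ _ t.+1) //=.
rewrite [X in _ + X]big1_seq ?addn0 => [|k]; last first.
  rewrite mem_index_iota => /andP[_ /andP[lt_t_k _]].
  have lt_n2 : n.*2 < p ^ k.
    exact: leq_trans (trunc_log_ltn _ p_gt1) (leq_pexp2l (ltnW p_gt1) lt_t_k).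
  by rewrite !divn_small // (leq_ltn_trans _ lt_n2) // -addnn leq_addr.
apply: (@leq_trans (\sum_(1 <= k < t.+1) 1)).
  by apply: leq_sum => k _; rewrite double_divnB_le1 // expn_gt0 prime_gt0.
by rewrite sum_nat_const_nat muln1 subn1.
Qed.

Lemma pfactor_central_bin_le p n : prime p -> 0 < n -> p ^ logn p 'C(n.*2, n) <= n.*2.
Proof.
move=> pp n_gt0; apply: leq_trans (trunc_logP (prime_gt1 pp) _).
  by rewrite leq_pexp2l ?prime_gt0 ?logn_central_bin_le.
by rewrite double_gt0.
Qed.

Lemma logn_central_bin_le1 p n : prime p -> 0 < n -> n.*2 < p * p ->
  logn p 'C(n.*2, n) <= 1.
Proof.
move=> pp n_gt0 lt_n2; rewrite -ltnS -(ltn_exp2l _ _ (prime_gt1 pp)) expnS expn1.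
exact: leq_ltn_trans (pfactor_central_bin_le pp n_gt0) lt_n2.
Qed.

Lemma logn_central_bin_eq0 p n : prime p -> n.*2 < p * p -> n.*2 < 3 * p -> p <= n ->
  logn p 'C(n.*2, n) = 0.
Proof.
move=> pp lt_n2_pp lt_n2_3p le_p_n; have p_gt0 := prime_gt0 pp.
rewrite logn_central_bin //; apply: big1_seq => k /andP[_].
rewrite mem_index_iota => /andP[k_gt0 _]; case: k k_gt0 => [//|[_|k _]].
  have n_div : n %/ p = 1.
    by apply/eqP; rewrite eqn_leq -ltnS ltn_divLR ?leq_divRL //; lia.
  have n2_div : n.*2 %/ p = 2.
    by apply/eqP; rewrite eqn_leq -ltnS ltn_divLR ?leq_divRL //; lia.
  by rewrite expn1 n_div n2_div.
have lt_n2 : n.*2 < p ^ k.+2 by rewrite (leq_trans lt_n2_pp) // mulnn leq_pexp2l.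
by rewrite !divn_small // (leq_ltn_trans _ lt_n2) // -addnn leq_addr.
Qed.

Lemma pfactor_central_bin_le_split p n : prime p -> 0 < n -> p <= n ->
  p ^ logn p 'C(n.*2, n) <=
    (if p * p <= n.*2 then n.*2 else 1) * (if p <= n.*2 %/ 3 then p else 1).
Proof.
move=> pp n_gt0 le_p_n; case: (leqP (p * p) n.*2) => [le_pp|lt_pp].
  rewrite (leq_trans (pfactor_central_bin_le pp n_gt0)) // leq_pmulr //.
  by case: ifP => _; [exact: prime_gt0|].
rewrite mul1n; case: (leqP p (n.*2 %/ 3)) => [le_p_N|lt_N_p].
  by rewrite -[X in _ <= X]expn1 leq_pexp2l ?prime_gt0 ?logn_central_bin_le1.
by rewrite logn_central_bin_eq0 //; move: lt_N_p; rewrite ltn_divLR //; lia.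
Qed.

Lemma central_bin_le n m : 0 < n -> m * m <= n.*2 < m.+1 * m.+1 ->
  (forall p, prime p -> p <= n.*2 -> p <= n) ->
  'C(n.*2, n) <= n.*2 ^ m.+1 * 4 ^ (n.*2 %/ 3).
Proof.
move=> n_gt0 /andP[le_mm lt_mm] no_prime; set N := n.*2 %/ 3.
have le_n_n2 : n <= n.*2 by rewrite -addnn leq_addr.
rewrite [X in X <= _](prod_pfactor_bin le_n_n2).
apply: (@leq_trans (\prod_(0 <= p < n.*2.+1)
   ((if p < m.+1 then n.*2 else 1) * (if prime p && (p < N.+1) then p else 1)))).
  rewrite big_nat_cond [X in _ <= X]big_nat_cond.
  apply: leq_prod => p /andP[/andP[_ lt_p] _].
  have [pp|np] := boolP (prime p); last first.
    by rewrite lognE (negbTE np) /= muln1; case: ifP; rewrite ?double_gt0.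
  have sq : (p * p <= n.*2) = (p < m.+1) by apply/idP/idP; nia.
  by rewrite -sq ltnS /=; apply: pfactor_central_bin_le_split => //; apply: no_prime.
have sq_part : \prod_(0 <= p < n.*2.+1 | p < m.+1) n.*2 = n.*2 ^ m.+1.
  rewrite -{2}(subn0 m.+1) -prod_nat_const_nat (big_nat_widen 0 m.+1 n.*2.+1) //; nia.
rewrite big_split /= -!big_mkcond /= sq_part -big_nat_widen ?ltnS ?leq_div //.
by rewrite leq_mul2l primorial_le orbT.
Qed.

Lemma exp6_le_exp2 m : 40 <= m -> m.+1 ^ 6 <= 2 ^ (m - 2).
Proof.
elim: m => // m IH; rewrite leq_eqVlt => /orP[/eqP m40|m_ge40].
  (* Stated for a variable exponent so that [2 ^ 38] is never evaluated in unary. *)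
  have base k : 33 <= k -> 41 ^ 6 <= 2 ^ k.
    move=> le_k; apply: leq_trans (leq_pexp2l (isT : 0 < 2) le_k).
    by rewrite -[6]/(2 * 3) -[33]/(11 * 3) !expnM leq_exp2r.
  by rewrite -m40; apply: base.
have sq_le : 4 * m.+2 ^ 2 <= 5 * m.+1 ^ 2 by rewrite !expnS expn0; nia.
have cube_le : 64 * m.+2 ^ 6 <= 125 * m.+1 ^ 6.
  have -> : 64 * m.+2 ^ 6 = (4 * m.+2 ^ 2) ^ 3 by rewrite expnMn -expnM.
  have -> : 125 * m.+1 ^ 6 = (5 * m.+1 ^ 2) ^ 3 by rewrite expnMn -expnM.
  by rewrite leq_exp2r.
have := IH m_ge40; rewrite (_ : m.+1 - 2 = (m - 2).+1) ?expnS; last by lia.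
move: cube_le; set a := m.+2 ^ 6; set b := m.+1 ^ 6; set c := 2 ^ (m - 2); lia.
Qed.

Lemma central_bound_lt n m : 40 <= m -> m * m <= n.*2 < m.+1 * m.+1 ->
  n.*2 ^ m.+2 * 4 ^ (n.*2 %/ 3) < 4 ^ n.
Proof.
move=> m_ge40 /andP[le_mm lt_mm]; set N := n.*2 %/ 3.
have le_N : N * 3 <= n.*2 by apply: leq_divM.
have -> : 4 ^ n = 4 ^ (n - N) * 4 ^ N by rewrite -expnD subnK //; lia.
rewrite ltn_pmul2r ?expn_gt0 //.
rewrite -(ltn_exp2r _ _ (isT : 0 < 3)) -expnM mulnC expnM.
apply: (@leq_trans ((m.+1 ^ 6) ^ m.+2)).
  by rewrite ltn_exp2r // -[6]/(2 * 3) expnM ltn_exp2r // -mulnn.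
apply: (@leq_trans ((2 ^ (m - 2)) ^ m.+2)); first by rewrite leq_exp2r // exp6_le_exp2.
by rewrite -!expnM -[4]/(2 ^ 2) -expnM leq_pexp2l //; nia.
Qed.

Lemma bertrand_small n : 0 < n < 1259 -> exists2 p, prime p & n < p <= n.*2.
Proof.
move=> /andP[n_gt0 lt_n].
(* Landau's trick: each prime of the chain is less than twice its predecessor. *)
pose chain := [:: 2; 3; 5; 7; 13; 23; 43; 83; 163; 317; 631; 1259].
have chain_prime : all prime chain by vm_compute.
have chain_cover : all (fun n => has (fun p => n < p <= n.*2) chain) (iota 1 1258).
  by vm_compute.
have n_in : n \in iota 1 1258 by rewrite mem_iota; lia.
have /hasP[p /(allP chain_prime) pp lt_p] := allP chain_cover n n_in.
by exists p.
Qed.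

Lemma sqrt_nat_exists x : exists m, m * m <= x < m.+1 * m.+1.
Proof.
elim: x => [|x [m /andP[le_mm lt_mm]]]; first by exists 0.
have [lt_x|le_x] := ltnP x.+1 (m.+1 * m.+1); first by exists m; rewrite lt_x andbT ltnW.
by exists m.+1; rewrite le_x /=; nia.
Qed.

Lemma bertrand n : 0 < n -> exists2 p, prime p & n < p <= n.*2.
Proof.
move=> n_gt0; have [lt_n|le_n] := ltnP n 1259.
  by apply: bertrand_small; rewrite n_gt0.
pose large_prime p := prime p && (n < p).
have [/hasP[p]|/hasPn no_prime] := boolP (has large_prime (iota 0 n.*2.+1)).
  rewrite mem_iota => /andP[_ lt_p] /andP[pp lt_n_p].
  by exists p; rewrite // lt_n_p -ltnS.
have {}no_prime p : prime p -> p <= n.*2 -> p <= n.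
  move=> pp le_p; have := no_prime p; rewrite /large_prime mem_iota ltnS le_p pp leqNgt => /(_ isT).
  by rewrite andTb -leqNgt.
exfalso; have [m hm] := sqrt_nat_exists n.*2.
have m_ge40 : 40 <= m by case/andP: hm => _; nia.
have := leq_trans (exp4_le_central_bin n_gt0)
  (leq_mul (leqnn n.*2) (central_bin_le n_gt0 hm no_prime)).
by rewrite mulnA -expnS leqNgt central_bound_lt.
Qed.

Lemma largest_prime_lt_ndvd q n : prime q -> q < n ->
  (forall r, prime r -> r < n -> r <= q) -> ~~ (q %| n).
Proof.
move=> pq lt_q_n q_max; apply/negP => /dvdnP[c def_n].
have [r pr /andP[lt_q_r le_r]] := bertrand (prime_gt0 pq).
have c_gt1 : 1 < c.
  rewrite ltnNge; apply/negP => le_c1.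
  by have := leq_mul le_c1 (leqnn q); rewrite -def_n mul1n leqNgt lt_q_n.
have le_r_n : r <= n by rewrite def_n; nia.
have lt_r_n : r < n.
  rewrite ltn_neqAle le_r_n andbT; apply/eqP => def_r.
  have : q %| r by rewrite def_r def_n dvdn_mull.
  by rewrite dvdn_prime2 // => /eqP eq_qr; rewrite eq_qr ltnn in lt_q_r.
by have := q_max r pr lt_r_n; rewrite leqNgt lt_q_r.
Qed.

(** * Binomial coefficients avoiding a prime *)

Lemma ppart_dvdn_of_ndvd_bin p n k : prime p -> 0 < k <= n -> ~~ (p %| 'C(n, k)) ->
  ppart p n %| k.
Proof.
move=> pp /andP[k_gt0 le_k] ndvd; rewrite /ppart pfactor_dvdn //.
have n_gt0 : 0 < n := leq_trans k_gt0 le_k.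
have C_gt0 : 0 < 'C(n.-1, k.-1) by rewrite bin_gt0; lia.
have Ck_gt0 : 0 < 'C(n, k) by rewrite bin_gt0.
have := congr1 (logn p) (mul_bin_diag n k.-1); rewrite prednK //.
rewrite !lognM // (@logn_coprime p 'C(n, k)) ?prime_coprime //; lia.
Qed.

Lemma ppartM_dvdn_of_ndvd_bin p1 p2 n k : prime p1 -> prime p2 -> p1 != p2 ->
  0 < k <= n -> ~~ (p1 %| 'C(n, k)) -> ~~ (p2 %| 'C(n, k)) ->
  ppart p1 n * ppart p2 n %| k.
Proof.
move=> pp1 pp2 p12 k_range nd1 nd2.
rewrite Gauss_dvd ?ppart_dvdn_of_ndvd_bin //.
by rewrite coprimeXl // coprimeXr // prime_coprime // dvdn_prime2.
Qed.

Lemma ppartM_le_of_ndvd_bin p1 p2 n k : prime p1 -> prime p2 -> p1 != p2 ->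
  0 < k < n -> ~~ (p1 %| 'C(n, k)) -> ~~ (p2 %| 'C(n, k)) ->
  ppart p1 n * ppart p2 n <= k /\ ppart p1 n * ppart p2 n <= n - k.
Proof.
move=> pp1 pp2 p12 /andP[k_gt0 lt_k] nd1 nd2; have le_k := ltnW lt_k.
split.
  by apply: (dvdn_leq k_gt0); apply: ppartM_dvdn_of_ndvd_bin; rewrite ?k_gt0.
have bin_nk : 'C(n, n - k) = 'C(n, k) := bin_sub le_k.
apply: dvdn_leq; first by rewrite subn_gt0.
by apply: ppartM_dvdn_of_ndvd_bin; rewrite ?bin_nk ?subn_gt0 ?lt_k ?leq_subr.
Qed.

Theorem mainTheorem13 (n q1 p1 p2 : nat) :
  0 < n ->
  1 < size (primes n) ->
  (* q1 is the largest prime smaller than n *)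
  prime q1 -> q1 < n -> (forall q, prime q -> q < n -> q <= q1) ->
  (* p1^a1 is the largest prime-power divisor of n *)
  prime p1 -> p1 %| n ->
  (forall p, prime p -> p %| n -> ppart p n <= ppart p1 n) ->
  (* p2^a2 is the second largest prime-power divisor of n *)
  prime p2 -> p2 %| n -> p2 != p1 ->
  (forall p, prime p -> p %| n -> p != p1 -> ppart p n <= ppart p2 n) ->
  n - q1 < ppart p1 n * ppart p2 n ->
  condition1_var n [:: p1; p2; q1].
Proof.
move=> n_gt0 _ pq1 lt_q1n q1_max pp1 p1n _ pp2 p2n p21 _ lt_P.
have q1_neq p : p %| n -> p != q1.
  by move=> pn; apply: contraNneq (largest_prime_lt_ndvd pq1 lt_q1n q1_max) => <-.
split; first by rewrite /= !inE negb_or eq_sym p21 !q1_neq.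
split; first by rewrite /= pp1 pp2 pq1.
move=> k /andP[k_gt0 le_k].
have [d1|nd1] := boolP (p1 %| 'C(n, k)); first by exists p1; rewrite ?inE ?eqxx.
have [d2|nd2] := boolP (p2 %| 'C(n, k)); first by exists p2; rewrite ?inE ?eqxx ?orbT.
exists q1; first by rewrite !inE eqxx !orbT.
have lt_kn : k < n by rewrite (leq_ltn_trans le_k) // subn1 ltn_predL.
have k_range : 0 < k < n by rewrite k_gt0 lt_kn.
have p12 : p1 != p2 by rewrite eq_sym.
have [le_P_k le_P_nk] := ppartM_le_of_ndvd_bin pp1 pp2 p12 k_range nd1 nd2.
have le_q1n := ltnW lt_q1n.
apply: prime_dvd_bin_large => //.
  by rewrite -(ltn_sub2lE k le_q1n) (leq_trans lt_P).
by rewrite ltn_subCl ?(leq_trans lt_P) // ltnW.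
Qed.
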